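(* For every preference profile $p\in\mathcal{P}$, the stabilizer $\mathrm{Stab}_{G^*}(p)=\{\varphi\in G^*: p^\varphi=p\}$ is a semiregular subgroup of $G^*$.
   Context: Fix $n\ge 2$, $W=\{1,\dots,n\}$, $M=\{n+1,\dots,2n\}$, $I=W\cup M$. Permutations compose right-to-left. A preference profile is a function $p$ on $I$ assigning to each $x\in W$ a linear order $p(x)$ on $M$ and to each $y\in M$ a linear order $p(y)$ on $W$; $\mathcal{P}$ is the set of preference profiles. $G^*=\{\varphi\in\mathrm{Sym}(I):\{\varphi(W),\varphi(M)\}=\{W,M\}\}$. For a linear order $R$ on $X\subseteq I$ and $\varphi\in\mathrm{Sym}(I)$, $\varphi R$ is the relation on $\varphi(X)$ with $(a,b)\in\varphi R$ iff $(\varphi^{-1}(a),\varphi^{-1}(b))\in R$. For $\varphi\in G^*$, $p^\varphi(z)=\varphi\,p(\varphi^{-1}(z))$. A subgroup $S\le\mathrm{Sym}(I)$ is semiregular if for every $z\in I$ the only element of $S$ fixing $z$ is the identity. *)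

From mathcomp Require Import all_boot all_order all_fingroup.
Set Implicit Arguments. Unset Strict Implicit. Unset Printing Implicit Defensive.
Local Open Scope group_scope.

(* The agent set I = {1,...,2n} is modelled by 'I_(n+n) = {0,...,2n-1};
   W = {1..n} corresponds to {0..n-1}, M = {n+1..2n} to {n..2n-1}. *)
Definition agents (n : nat) := 'I_(n + n).
Definition Wset (n : nat) : {set agents n} := [set i : agents n | (i < n)%N].
Definition Mset (n : nat) : {set agents n} := [set i : agents n | (n <= i)%N].

Definition linear_order_on (T : finType) (X : {set T}) (R : rel T) : Prop :=
  [/\ forall a b, R a b -> a \in X /\ b \in X,
      forall a, a \in X -> R a a,
      forall a b, R a b -> R b a -> a = b,
      forall a b c, R a b -> R b c -> R a c &
      forall a b, a \in X -> b \in X -> R a b || R b a].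

Definition is_profile (n : nat) (p : agents n -> rel (agents n)) : Prop :=
  (forall x, x \in Wset n -> linear_order_on (Mset n) (p x)) /\
  (forall y, y \in Mset n -> linear_order_on (Wset n) (p y)).

Definition Gstar (n : nat) : {set {perm agents n}} :=
  [set phi : {perm agents n} |
    ((phi @: Wset n == Wset n) && (phi @: Mset n == Mset n)) ||
    ((phi @: Wset n == Mset n) && (phi @: Mset n == Wset n))].

Definition perm_rel (T : finType) (phi : {perm T}) (R : rel T) : rel T :=
  fun a b => R (phi^-1 a) (phi^-1 b).

Definition profile_act (n : nat) (p : agents n -> rel (agents n))
  (phi : {perm agents n}) : agents n -> rel (agents n) :=
  fun z => perm_rel phi (p (phi^-1 z)).

Definition stab (n : nat) (p : agents n -> rel (agents n)) : {set {perm agents n}} :=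
  [set phi in Gstar n |
    [forall z, [forall a, [forall b, profile_act p phi z a b == p z a b]]]].

Definition semiregular (T : finType) (S : {set {perm T}}) : Prop :=
  forall phi z, phi \in S -> phi z = z -> phi = 1.

(** A permutation preserving a finite linear order fixes every point of its
    field: it preserves the sizes of the initial segments, and these sizes
    separate the points.  So if [phi] stabilises [p] and fixes some [z] in [W],
    it is an automorphism of the linear order [p z] on [M] and fixes [M]
    pointwise; fixing a point of [M], it fixes [W] pointwise in the same way,
    so [phi = 1].  The case [z] in [M] is symmetric. *)

From mathcomp Require Import all_boot all_order all_fingroup.
Set Implicit Arguments. Unset Strict Implicit. Unset Printing Implicit Defensive.
Local Open Scope group_scope.

Section LinearOrder.

Variables (T : finType) (X : {set T}) (R : rel T).
Hypothesis ordR : linear_order_on X R.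

Let downset a := [set b | R b a].

Lemma card_downset_inj : {in X &, injective (fun a => #|downset a|)}.
Proof.
case: ordR => _ refl asym trans tot.
move=> a c aX cX; wlog Rac : a c aX cX / R a c => [hwlog|].
  by case/orP: (tot a c aX cX) => ? eq_card; [|symmetry]; apply: hwlog.
move=> eq_card; apply: asym => //.
have sub_ac : downset a \subset downset c.
  by apply/subsetP=> b; rewrite !inE => Rba; apply: trans Rba Rac.
have /eqP eq_ac : downset a == downset c by rewrite eqEcard sub_ac eq_card /=.
have : c \in downset c by rewrite inE refl.
by rewrite -eq_ac inE.
Qed.

Lemma linear_order_mono_perm_id (phi : {perm T}) :
  {mono phi : a b / R a b} -> {in X, forall a, phi a = a}.
Proof.
move=> mono_phi a aX.
have phiaX : phi a \in X.
  case: ordR => supp refl _ _ _.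
  by case: (supp (phi a) (phi a)); rewrite ?mono_phi ?refl.
apply: card_downset_inj => //.
have -> : downset a = phi @^-1: downset (phi a).
  by apply/setP=> b; rewrite !inE mono_phi.
by rewrite card_preimset //; apply: perm_inj.
Qed.

End LinearOrder.

Section FixedPoint.

Variables (T : finType) (W M : {set T}) (p : T -> rel T).
Hypothesis cover : forall z, (z \in W) || (z \in M).
Hypotheses (ordW : {in W, forall x, linear_order_on M (p x)})
           (ordM : {in M, forall y, linear_order_on W (p y)}).
Variables (w0 m0 : T).
Hypotheses (w0W : w0 \in W) (m0M : m0 \in M).

Variable phi : {perm T}.
Hypothesis phi_p : forall z a b, p (phi z) (phi a) (phi b) = p z a b.

Lemma fixpoint_fixes_field (X : {set T}) z :
  linear_order_on X (p z) -> phi z = z -> {in X, forall a, phi a = a}.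
Proof.
move=> ordz phiz; apply: (linear_order_mono_perm_id ordz) => a b.
by rewrite -{1}phiz phi_p.
Qed.

Lemma profile_perm_fixpoint_id z : phi z = z -> phi = 1.
Proof.
move=> phiz.
have fixW_M : {in W, forall a, phi a = a} -> {in M, forall a, phi a = a}.
  by move=> fixW; apply: fixpoint_fixes_field (ordW w0W) (fixW _ w0W).
have fixM_W : {in M, forall a, phi a = a} -> {in W, forall a, phi a = a}.
  by move=> fixM; apply: fixpoint_fixes_field (ordM m0M) (fixM _ m0M).
have [fixW fixM] : {in W, forall a, phi a = a} /\ {in M, forall a, phi a = a}.
  case/orP: (cover z) => zX.
  - have fixM := fixpoint_fixes_field (ordW zX) phiz.
    by split; [apply: fixM_W|].
  - have fixW := fixpoint_fixes_field (ordM zX) phiz.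
    by split; [|apply: fixW_M].
by apply/permP=> a; rewrite perm1; case/orP: (cover a); [apply: fixW|apply: fixM].
Qed.

End FixedPoint.

Lemma Gstar1 n : 1 \in Gstar n.
Proof. by rewrite inE !(eq_imset _ (@perm1 _)) !imset_id !eqxx. Qed.

Lemma GstarM n (phi psi : {perm agents n}) :
  phi \in Gstar n -> psi \in Gstar n -> phi * psi \in Gstar n.
Proof.
have imsetM (A : {set agents n}) : (phi * psi) @: A = psi @: (phi @: A).
  by rewrite (eq_imset _ (permM phi psi)) imset_comp.
rewrite !inE !imsetM.
by case/orP=> /andP[/eqP-> /eqP->]; case/orP=> /andP[/eqP-> /eqP->];
  rewrite !eqxx ?orbT.
Qed.

Lemma stabP n (p : agents n -> rel (agents n)) phi :
  reflect (phi \in Gstar n /\ forall z a b, p (phi z) (phi a) (phi b) = p z a b)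
          (phi \in stab p).
Proof.
apply: (iffP setIdP) => -[Gphi phi_p]; split=> //; first move=> z a b.
  have /forallP/(_ (phi a))/forallP/(_ (phi b))/eqP := forallP phi_p (phi z).
  by rewrite /profile_act /perm_rel !permK.
apply/forallP=> z; apply/forallP=> a; apply/forallP=> b; apply/eqP.
by rewrite /profile_act /perm_rel -phi_p !permKV.
Qed.

Lemma WsetVMset n (z : agents n) : (z \in Wset n) || (z \in Mset n).
Proof. by rewrite !inE ltnNge orNb. Qed.

Theorem theorem12 (n : nat) (hn : (2 <= n)%N)
  (p : agents n -> rel (agents n)) (hp : is_profile p) :
  [/\ stab p \subset Gstar n, group_set (stab p) & semiregular (stab p)].
Proof.
case: hp => ordW ordM.
have n_gt0 : (0 < n)%N by apply: leq_trans hn.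
have ltn_nn : (n < n + n)%N by rewrite -addn1 leq_add2l.
have w0W : Ordinal (leq_trans n_gt0 (ltnW ltn_nn)) \in Wset n by rewrite inE.
have m0M : Ordinal ltn_nn \in Mset n by rewrite inE.
split.
- by apply/subsetP=> phi /stabP[].
- apply/group_setP; split.
    by apply/stabP; split=> [|z a b]; rewrite ?Gstar1 ?perm1.
  move=> phi psi /stabP[Gphi phi_p] /stabP[Gpsi psi_p].
  by apply/stabP; split=> [|z a b]; rewrite ?GstarM // !permM psi_p phi_p.
- move=> phi z /stabP[_ phi_p].
  exact: profile_perm_fixpoint_id (@WsetVMset n) ordW ordM _ _ w0W m0M phi phi_p z.
Qed.
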